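(* There exists a sequence of integers $(q_k)_{k\ge1}$ with $q_k\ge2$ for all $k\in\mathbb{N}$ and $\liminf_{k\to\infty} q_k/k = 1$ such that for each $C>0$ there exist $n\in\mathbb{N}$ and a collection $\mathcal{A}$ of hyperplanes (each with non-empty set of fixed coordinates) whose union is $Q:=[q_1]\times\cdots\times[q_n]$, no two of which are parallel, and with $F(A)\cap[C]=\emptyset$ for every $A\in\mathcal{A}$.
   Context: $[m]=\{1,\dots,m\}$. A hyperplane in $Q=S_1\times\cdots\times S_n$ is $A=A_1\times\cdots\times A_n$ with each $A_k$ either $S_k$ or a singleton in $S_k$; $F(A)=\{k:A_k\text{ is a singleton}\}$ is its set of fixed coordinates; two hyperplanes are parallel if they have the same set of fixed coordinates. *)

From HB Require Import structures.
From mathcomp Require Import all_boot all_order all_algebra.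
From mathcomp Require Import all_classical all_reals all_analysis.
From mathcomp Require Import Rstruct.
Set Implicit Arguments. Unset Strict Implicit. Unset Printing Implicit Defensive.

(* Coordinates of Q = [q_1] x ... x [q_n] are indexed by k : 'I_n, standing
   for the coordinate k+1; S_{k+1} = [q_{k+1}] = {1, ..., q (k+1)}.
   A hyperplane A = A_1 x ... x A_n is encoded by A : 'I_n -> option nat,
   where A k = None means A_{k+1} = S_{k+1}, and A k = Some a means
   A_{k+1} = {a} (with a in S_{k+1}). *)

Definition hyperplane (q : nat -> nat) (n : nat) (A : 'I_n -> option nat) : Prop :=
  forall k : 'I_n, match A k with
                   | None => (True : Prop)
                   | Some a => is_true (1 <= a <= q k.+1)%N
                   end.

Definition fixedc (n : nat) (A : 'I_n -> option nat) (k : 'I_n) : bool :=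
  A k != None.

Definition has_fixed (n : nat) (A : 'I_n -> option nat) : Prop :=
  exists k : 'I_n, fixedc A k.

Definition parallel (n : nat) (A B : 'I_n -> option nat) : Prop :=
  forall k : 'I_n, fixedc A k = fixedc B k.

Definition inQ (q : nat -> nat) (n : nat) (x : 'I_n -> nat) : Prop :=
  forall k : 'I_n, (1 <= x k <= q k.+1)%N.

Definition in_hyp (n : nat) (x : 'I_n -> nat) (A : 'I_n -> option nat) : Prop :=
  forall k : 'I_n, match A k with
                   | None => (True : Prop)
                   | Some a => (x k = a : Prop)
                   end.

(* the sequence k |-> q_k / k for k >= 1 (shifted to start at index 0),
   as extended reals *)
Definition ratio_seq (q : nat -> nat) : nat -> \bar Rdefinitions.R :=
  fun k => (((q k.+1)%:R / (k.+1)%:R : Rdefinitions.R)%R)%:E.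

From HB Require Import structures.
From mathcomp Require Import all_boot all_order all_algebra.
From mathcomp Require Import all_classical all_reals all_analysis.
From mathcomp Require Import Rstruct Rstruct_topology.
From mathcomp Require Import zify ring lra.
Set Implicit Arguments. Unset Strict Implicit. Unset Printing Implicit Defensive.
Import Order.TTheory GRing.Theory Num.Theory numFieldNormedType.Exports.

(* Take q_k = max(2, k - floor(k / (J k + 2))) with J k = floor(log2 log2 log2 k), so
   that q_k / k -> 1 as J k -> oo.  On the block of coordinates k = m (j+2) + i with
   2^2^2^j <= m < 2^(2 (j+2) 2^2^j) and i < j+2, J is constant equal to j and
   q_k = m (j+1) + i, so that the product of the 1 + 1/q_k over the block,
   prod_m (1 + (j+2) / (m (j+1))), grows like the range of m to the power
   (j+2)/(j+1), and exceeds 1 + ln |Q| for the box Q ending with the block.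
   Take one hyperplane for each nonempty set S of block coordinates, fixing exactly
   the coordinates in S: no two are parallel and, as the block starts beyond C,
   none fixes a coordinate <= C.  Choosing the fixed values greedily, the
   hyperplane for S covers at least a fraction 1/N_S of the points left uncovered,
   where N_S = prod_(k in S) q_k.  So the number of points left uncovered is at most
   |Q| prod_S (1 - 1/N_S) <= |Q| exp (- sum_S 1/N_S) = |Q| exp (1 - prod_k (1 + 1/q_k)) < 1. *)

Lemma trunc_log_lt p k a : 1 < p -> 0 < k -> k < p ^ a -> trunc_log p k < a.
Proof.
move=> p_gt1 k_gt0 k_lt; rewrite -(ltn_exp2l _ _ p_gt1).
exact: leq_ltn_trans (trunc_logP p_gt1 k_gt0) k_lt.
Qed.

Lemma double_add2_le_exp2 a : 3 <= a -> (2 * a).+2 <= 2 ^ a.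
Proof.
elim: a => // a IH a_ge3; rewrite expnS.
have [a3 | a_lt3] := leqP 3 a; first by have := IH a3; lia.
by have -> : a = 2 by lia.
Qed.

Lemma big_nat_period (T : Type) (idx : T) (op : Monoid.law idx) a b p (F : nat -> T) :
  a <= b -> \big[op/idx]_(a * p <= k < b * p) F k
             = \big[op/idx]_(a <= m < b) \big[op/idx]_(i < p) F (m * p + i).
Proof.
elim: b => [|b IH]; first by rewrite leqn0 => /eqP ->; rewrite !big_geq.
rewrite leq_eqVlt => /orP[/eqP ->|]; first by rewrite !big_geq.
rewrite ltnS => a_le_b; rewrite big_nat_recr //= -IH //.
rewrite (@big_cat_nat _ _ _ (b * p)) /= ?leq_mul2r ?a_le_b ?leqnSn ?orbT //.
congr (op _ _); rewrite mulSn -{1}(add0n (b * p)) big_addn addnK big_mkord.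
by apply: eq_bigr => i _; rewrite addnC.
Qed.

Lemma card_ord_between m a : #|[pred v : 'I_m | 1 <= v <= a]| <= a.
Proof.
rewrite cardE -(size_map val) -(size_iota 1 a).
apply: uniq_leq_size; first by rewrite map_inj_uniq ?enum_uniq //; exact: val_inj.
move=> y /mapP[v]; rewrite mem_enum inE => /andP[v_ge1 v_le] ->.
by rewrite mem_iota !size_iota add1n ltnS in v_le *; apply/andP.
Qed.

(** * Greedy covering *)

Section GreedyCover.
Variables (T X I : finType) (f : I -> T -> X) (N : I -> nat).

Lemma exists_big_fiber (x0 : X) i (U : {set T}) :
  #|f i @: U| <= N i -> exists v, #|U| <= #|[set x in U | f i x == v]| * N i.
Proof.
move=> le_im.
pose c v := #|[set x in U | f i x == v]|.
have [v _ c_max] : extremum_spec geq xpredT c [arg max_(v > x0) c v].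
  exact: arg_maxnP.
exists v.
have -> : #|U| = \sum_(w in f i @: U) c w.
  rewrite -sum1_card (partition_big_imset (f i)) /=.
  by apply: eq_bigr => w _; rewrite /c -sum1_card; apply: eq_bigl => x; rewrite inE.
apply: leq_trans (_ : \sum_(w in f i @: U) c v <= _).
  by apply: leq_sum => w _; exact: c_max.
by rewrite sum_nat_const mulnC leq_mul2l le_im orbT.
Qed.

(* Fix f i to its most frequent value on U and recurse on the points it misses. *)
Lemma greedy_avoid (x0 : X) (s : seq I) (U : {set T}) :
  uniq s -> (forall i, i \in s -> #|f i @: U| <= N i) ->
  exists a : I -> X,
    #|[set x in U | all (fun i => f i x != a i) s]| * \prod_(i <- s) N i
      <= #|U| * \prod_(i <- s) (N i).-1.
Proof.
elim: s U => [|i s IH] U.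
  move=> _ _; exists (fun=> x0); rewrite !big_nil !muln1 subset_leq_card //.
  by apply/fintype.subsetP => x; rewrite inE => /andP[].
case/andP=> i_notin_s uniq_s le_im.
have [v fiber_big] := exists_big_fiber x0 (le_im i (mem_head _ _)).
set U' := [set x in U | f i x != v].
have le_im' j : j \in s -> #|f j @: U'| <= N j.
  move=> js; apply: leq_trans (le_im j _); last by rewrite inE js orbT.
  by apply/subset_leq_card/imsetS/fintype.subsetP => x; rewrite inE => /andP[].
have [a avoid] := IH U' uniq_s le_im'.
have shrink : #|U'| * N i <= #|U| * (N i).-1.
  have : #|U| = #|[set x in U | f i x == v]| + #|U'|.
    rewrite -(cardsID [set x | f i x == v] U); congr (_ + _); apply: eq_card => x;
      by rewrite !inE andbC.
  case: (N i) fiber_big => [|N'] fiber_big cardU; first by rewrite muln0.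
  rewrite /= mulnS; nia.
exists (fun j => if j == i then v else a j).
have -> : [set x in U | all (fun j => f j x != (if j == i then v else a j)) (i :: s)]
        = [set x in U' | all (fun j => f j x != a j) s].
  apply/setP => x; rewrite !inE /= eqxx -andbA; congr (_ && (_ && _)).
  apply: eq_in_all => j js; case: (j =P i) => // ji.
  by rewrite -ji js in i_notin_s.
rewrite !big_cons mulnCA (mulnA #|U|).
apply: leq_trans (leq_mul (leqnn (N i)) avoid) _.
by rewrite mulnCA mulnA leq_mul2r shrink orbT.
Qed.

Local Open Scope ring_scope.

Lemma prod_predn_lt_expR (R : realType) (J : Type) (s : seq J) (M : J -> nat) (u : nat) :
  (forall i, 0 < M i)%N -> (u%:R : R) < expR (\sum_(i <- s) ((M i)%:R)^-1) ->
  (u * \prod_(i <- s) (M i).-1 < \prod_(i <- s) M i)%N.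
Proof.
move=> M_gt0 u_lt.
have MR_gt0 i : (0 : R) < (M i)%:R by rewrite ltr0n.
have predME i : ((M i).-1%:R : R) = (M i)%:R * (1 - ((M i)%:R)^-1).
  rewrite mulrBr mulr1 divff ?gt_eqF //.
  by rewrite -[in RHS](prednK (M_gt0 i)) -natr1 addrK.
rewrite -(ltr_nat R) natrM !natr_prod.
under eq_bigr do rewrite predME.
rewrite big_split /= mulrCA gtr_pMr ?prodr_gt0 //.
have inv_le1 i : ((M i)%:R : R)^-1 <= 1 by rewrite invf_le1 // ler1n.
have le_exp : \prod_(i <- s) (1 - ((M i)%:R : R)^-1)
              <= expR (- \sum_(i <- s) ((M i)%:R)^-1).
  rewrite -sumrN expR_sum; apply: ler_prod => i _.
  by rewrite subr_ge0 inv_le1 expR_ge1Dx.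
apply: le_lt_trans (ler_wpM2l (ler0n _ u) le_exp) _.
by rewrite expRN ltr_pdivrMr ?expR_gt0 // mul1r.
Qed.

Lemma greedy_cover (R : realType) (x0 : X) (s : seq I) (U : {set T}) :
  uniq s -> (forall i, 0 < N i)%N -> (forall i, i \in s -> #|f i @: U| <= N i)%N ->
  (#|U|%:R : R) < expR (\sum_(i <- s) ((N i)%:R)^-1) ->
  exists a : I -> X, forall x, x \in U -> exists2 i, i \in s & f i x = a i.
Proof.
move=> uniq_s N_gt0 le_im card_lt.
have [a avoid] := greedy_avoid x0 uniq_s le_im.
have uncovered0 : #|[set x in U | all (fun i => f i x != a i) s]| = 0%N.
  apply/eqP; rewrite -leqn0 -ltnS -(@ltn_pmul2r (\prod_(i <- s) N i)) ?prodn_gt0 //.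
  by rewrite mul1n; apply: leq_ltn_trans avoid (prod_predn_lt_expR N_gt0 card_lt).
exists a => x xU.
move/setP/(_ x): (cards0_eq uncovered0); rewrite !inE xU /=.
by move/negbT/allPn => [i si /negPn/eqP]; exists i.
Qed.

End GreedyCover.

Section SubsetSums.
Variables (R : comPzRingType) (I : finType).
Local Open Scope ring_scope.

Lemma sum_subsets_prod (V : {set I}) (y : I -> R) :
  \sum_(S : {set I} | S \subset V) \prod_(i in S) y i = \prod_(i in V) (1 + y i).
Proof.
have -> : \prod_(i in V) (1 + y i) = \prod_i ((if i \in V then y i else 0) + 1).
  rewrite [RHS](bigID (mem V)) /= [X in _ * X]big1 ?mulr1 => [|i /negbTE ->].
    by apply: eq_bigr => i ->; rewrite addrC.
  by rewrite add0r.
rewrite bigA_distr [RHS](bigID (fun S : {set I} => S \subset V)) /=.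
rewrite [X in _ = _ + X]big1 ?addr0 => [|S /fintype.subsetPn[i iS iV]].
  apply: eq_bigr => S SV; rewrite [RHS](bigID (mem S)) /= [X in _ = _ * X]big1 ?mulr1.
    by apply: eq_bigr => i iS; rewrite iS (fintype.subsetP SV i iS).
  by move=> i /negbTE ->.
by rewrite (bigD1 i) //= iS (negbTE iV) mul0r.
Qed.

Lemma sum_nonempty_subsets_prod (V : {set I}) (y : I -> R) :
  \sum_(S : {set I} | (S \subset V) && (S != finset.set0)) \prod_(i in S) y i
    = \prod_(i in V) (1 + y i) - 1.
Proof.
rewrite -sum_subsets_prod [in RHS](bigD1 finset.set0) ?finset.sub0set //=.
rewrite [X in _ = X + _ - _]big_pred0 => [|i]; last by rewrite inE.
by rewrite addrC addKr.
Qed.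

End SubsetSums.

Section BoxProjection.
Variables (n M : nat) (b : 'I_n -> nat).

Definition box : {set {ffun 'I_n -> 'I_M.+1}} :=
  [set x : {ffun 'I_n -> 'I_M.+1} | [forall k, 1 <= x k <= b k]].

Definition proj (S : {set 'I_n}) (x : {ffun 'I_n -> 'I_M.+1}) : {ffun 'I_n -> 'I_M.+1} :=
  [ffun k => if k \in S then x k else ord0].

Lemma card_proj_box S : #|proj S @: box| <= \prod_(k in S) b k.
Proof.
pose G k : pred 'I_M.+1 := if k \in S then [pred v : 'I_M.+1 | 1 <= v <= b k] else pred1 ord0.
have sub : proj S @: box \subset [set x | x \in family G].
  apply/fintype.subsetP => _ /imsetP[x x_box ->]; move: x_box; rewrite inE => /forallP x_box.
  by rewrite inE; apply/familyP => k; rewrite /G ffunE; case: (k \in S); rewrite ?inE.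
apply: leq_trans (subset_leq_card sub) _.
rewrite cardsE card_family foldrE big_map big_enum /= [X in _ <= X]big_mkcond /=.
apply: leq_prod => k _; rewrite /G; case: (k \in S); first exact: card_ord_between.
by rewrite card1.
Qed.

End BoxProjection.

(** * The sequence q and its blocks *)

Definition log2log2log2 k := trunc_log 2 (trunc_log 2 (trunc_log 2 k)).
Definition qseq k := maxn 2 (k - k %/ (log2log2log2 k).+2).

Lemma qseq_ge2 k : 2 <= qseq k.
Proof. exact: leq_maxl. Qed.

Lemma qseq_le i : qseq i <= maxn 2 i.
Proof. by rewrite geq_max leq_maxl /= (leq_trans (leq_subr _ _) (leq_maxr 2 i)). Qed.

Definition period j := j.+2.
Definition lo_exp j := 2 ^ 2 ^ j.
Definition hi_exp j := 2 * period j * lo_exp j.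
Definition block_lo j := 2 ^ lo_exp j.
Definition block_hi j := 2 ^ hi_exp j.
Definition block_dim j := block_hi j * period j.
Definition log_bound j := block_dim j * (hi_exp j + period j).

Lemma lo_exp_sq j : lo_exp j ^ 2 = 2 ^ 2 ^ j.+1.
Proof. by rewrite /lo_exp -expnM -expnSr. Qed.

Lemma lo_exp_gt_double j : 3 <= j -> 2 * 2 ^ j < lo_exp j.
Proof.
move=> j_ge3; apply: leq_trans (double_add2_le_exp2 _) => //.
by apply: leq_trans (_ : 2 ^ 3 <= 2 ^ j); rewrite ?leq_exp2l.
Qed.

Lemma lo_exp_ge_period j : 3 <= j -> 4 * period j ^ 2 <= lo_exp j.
Proof.
move=> j_ge3; rewrite /lo_exp /period.
have j_le : j.+2 <= 2 ^ j by have := double_add2_le_exp2 j_ge3; lia.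
apply: leq_trans (_ : 2 ^ (2 * j).+2 <= _); last first.
  by rewrite leq_exp2l // double_add2_le_exp2.
have -> : 2 ^ (2 * j).+2 = 4 * (2 ^ j) ^ 2.
  by rewrite -expnM (mulnC j 2) !expnS mulnA.
by rewrite leq_mul2l /= leq_sqr.
Qed.

Lemma block_lo_lt_hi j : block_lo j < block_hi j.
Proof.
rewrite ltn_exp2l // /hi_exp /period -{1}(mul1n (lo_exp j)) ltn_mul2r.
by rewrite expn_gt0.
Qed.

Lemma block_start_gt j : j < block_lo j * period j.
Proof.
have lt_exp2 a : a < 2 ^ a := ltn_expl a (ltnSn 1).
apply: leq_trans (leq_pmulr _ _) => //; rewrite /block_lo /lo_exp.
apply: ltn_trans (lt_exp2 j) _; rewrite ltn_exp2l //.
by apply: ltn_trans (lt_exp2 j) _; rewrite ltn_exp2l.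
Qed.

Lemma block_dim_lt_exp2 j : (block_dim j).+1 <= 2 ^ (hi_exp j + period j).
Proof.
have := ltn_expl (period j) (ltnSn 1); have : 0 < 2 ^ hi_exp j by rewrite expn_gt0.
rewrite /block_dim /block_hi expnD; nia.
Qed.

Lemma log2log2log2_block j k :
  3 <= j -> block_lo j * period j <= k <= block_dim j -> log2log2log2 k = j.
Proof.
move=> j_ge3 /andP[k_ge k_le].
have k_gt0 : 0 < k by apply: leq_trans k_ge; rewrite muln_gt0 expn_gt0.
have log_ge : lo_exp j <= trunc_log 2 k.
  by apply: trunc_log_max => //; apply: leq_trans k_ge; rewrite leq_pmulr.
have log_lt : trunc_log 2 k < hi_exp j + period j.
  apply: trunc_log_lt k_gt0 _ => //; apply: leq_ltn_trans k_le _.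
  by rewrite /block_dim /block_hi expnD ltn_pmul2l ?expn_gt0 // ltn_expl.
have log_gt0 : 0 < trunc_log 2 k by apply: leq_trans log_ge; rewrite expn_gt0.
rewrite /log2log2log2; apply: trunc_log_eq => //; apply/andP; split.
  exact: trunc_log_max.
apply: trunc_log_lt log_gt0 _ => //; apply: leq_trans log_lt _.
have L_ge := lo_exp_ge_period j_ge3.
rewrite -lo_exp_sq /hi_exp; nia.
Qed.

Lemma qseq_block j m i : 3 <= j -> block_lo j <= m < block_hi j -> i < period j ->
  qseq (m * period j + i) = m * j.+1 + i.
Proof.
move=> j_ge3 /andP[m_ge m_lt] i_lt.
have log_eq : log2log2log2 (m * period j + i) = j.
  apply: log2log2log2_block => //; apply/andP; split.
    by apply: leq_trans (leq_addr _ _); rewrite leq_mul2r m_ge orbT.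
  apply: leq_trans (_ : m.+1 * period j <= _); first by rewrite mulSn; lia.
  by rewrite leq_mul2r m_lt orbT.
have m_ge2 : 2 <= m.
  by apply: leq_trans m_ge; rewrite -{1}(expn1 2) leq_exp2l // expn_gt0.
rewrite /qseq log_eq -/(period j) divnMDl // (divn_small i_lt) addn0.
have -> : m * j.+2 + i - m = m * j.+1 + i by rewrite !mulnS; lia.
by apply/maxn_idPr; nia.
Qed.

(* [block_prod_gt] raised to the power j+1, cleared of denominators. *)
Lemma block_ratio_nat j : 3 <= j ->
  (log_bound j).+1 ^ j.+1 * block_lo j ^ j.+1 * (block_lo j).+1
    < block_hi j ^ j.+1 * (block_hi j).+1.
Proof.
move=> j_ge3.
have L_ge := lo_exp_ge_period j_ge3; have L_gt := lo_exp_gt_double j_ge3.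
have log_le : (log_bound j).+1 <= 2 ^ (hi_exp j + 2 ^ j.+1).
  have inner : period j * (hi_exp j + period j) < lo_exp j ^ 2 by rewrite /hi_exp; nia.
  have : 0 < 2 ^ hi_exp j by rewrite expn_gt0.
  rewrite expnD -lo_exp_sq /log_bound /block_dim /block_hi -mulnA; nia.
have lo_le : block_lo j ^ j.+1 * (block_lo j).+1 <= 2 ^ (lo_exp j * j.+1 + (lo_exp j).+1).
  rewrite /block_lo -expnM expnD leq_mul2l expnS; have := expn_gt0 2 (lo_exp j); lia.
have exp_le : (hi_exp j + 2 ^ j.+1) * j.+1 + (lo_exp j * j.+1 + (lo_exp j).+1)
              <= hi_exp j * j.+1 + hi_exp j.
  rewrite /hi_exp /period expnS; nia.
have log_pow_le : (log_bound j).+1 ^ j.+1 <= (2 ^ (hi_exp j + 2 ^ j.+1)) ^ j.+1.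
  by rewrite leq_exp2r.
rewrite -mulnA; apply: leq_ltn_trans (leq_mul log_pow_le lo_le) _.
rewrite -expnM -expnD; apply: leq_ltn_trans (leq_pexp2l (isT : 0 < 2) exp_le) _.
by rewrite /block_hi expnD expnM ltn_pmul2l ?expn_gt0.
Qed.

Section BlockProduct.
Variable R : realFieldType.
Local Open Scope ring_scope.

Lemma bernoulli_le (x : R) n : 0 <= x -> 1 + n%:R * x <= (1 + x) ^+ n.
Proof.
move=> x_ge0; elim: n => [|n IH]; first by rewrite mul0r addr0 expr0.
rewrite exprS; apply: le_trans (_ : (1 + x) * (1 + n%:R * x) <= _); last first.
  by rewrite ler_pM2l //; lra.
have : 0 <= x * (n%:R * x) by rewrite !mulr_ge0.
rewrite -natr1; lra.
Qed.

Lemma prod_1Dinv_consecutive c p : (0 < c)%N ->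
  \prod_(i < p) (1 + ((c + i)%:R : R)^-1) = (c + p)%:R / c%:R.
Proof.
move=> c_gt0; case: p => [|p]; first by rewrite big_ord0 addn0 divff // pnatr_eq0 -lt0n.
rewrite -(big_mkord xpredT (fun i => 1 + ((c + i)%:R)^-1)).
rewrite (@telescope_prodf_eq _ 0 p.+1 (fun i => (c + i)%:R)) ?addn0 //.
  by move=> k _; rewrite pnatr_eq0 -lt0n ltn_addr.
by move=> k _; rewrite addnS -natr1 mulrDl divff ?mul1r // pnatr_eq0 -lt0n ltn_addr.
Qed.

Definition block_prod j : R :=
  \prod_(block_lo j * period j <= k < block_dim j) (1 + ((qseq k)%:R)^-1).

Lemma block_prodE j : (3 <= j)%N ->
  block_prod j = \prod_(block_lo j <= m < block_hi j) ((m * j.+1 + period j)%:R / (m * j.+1)%:R).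
Proof.
move=> j_ge3; rewrite /block_prod /block_dim big_nat_period; last exact/ltnW/block_lo_lt_hi.
rewrite big_nat_cond [RHS]big_nat_cond; apply: eq_bigr => m /andP[/andP[m_ge m_lt] _].
have m_gt0 : (0 < m)%N by apply: leq_trans m_ge; rewrite expn_gt0.
rewrite -prod_1Dinv_consecutive ?muln_gt0 ?m_gt0 //.
by apply: eq_bigr => i _; rewrite qseq_block ?m_ge.
Qed.

Lemma block_factor_ge m r : (0 < m)%N -> (0 < r)%N ->
  ((m.+1)%:R / m%:R) ^+ r * ((m.+2)%:R / (m.+1)%:R)
    <= (((m * r + r.+1)%:R / (m * r)%:R) : R) ^+ r.
Proof.
move=> m_gt0 r_gt0.
have mR : (m%:R : R) != 0 by rewrite pnatr_eq0 -lt0n.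
have rR : (r%:R : R) != 0 by rewrite pnatr_eq0 -lt0n.
have m1R : (m%:R + 1 : R) != 0 by rewrite natr1.
have -> : ((m * r + r.+1)%:R / (m * r)%:R : R)
          = ((m.+1)%:R / m%:R) * (1 + (((m.+1) * r)%:R)^-1).
  have mrR : (r%:R + m%:R * r%:R : R) != 0 by rewrite -natrM -natrD pnatr_eq0 -lt0n; lia.
  by rewrite !natrD !natrM -!natr1; field; rewrite mrR mR rR.
rewrite (exprMn r ((m.+1)%:R / m%:R)) ler_pM2l ?exprn_gt0 ?divr_gt0 ?ltr0n //.
have -> : ((m.+2)%:R / (m.+1)%:R : R) = 1 + r%:R * ((m.+1 * r)%:R)^-1.
  by rewrite natrM -!natr1; field; rewrite m1R rR.
by rewrite bernoulli_le ?invr_ge0 ?ler0n.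
Qed.

Lemma block_prod_pow_ge j : (3 <= j)%N ->
  ((block_hi j)%:R / (block_lo j)%:R) ^+ j.+1 * ((block_hi j).+1%:R / (block_lo j).+1%:R)
    <= block_prod j ^+ j.+1.
Proof.
move=> j_ge3.
have lo_gt0 : (0 < block_lo j)%N by rewrite expn_gt0.
have lo_lt_hi := block_lo_lt_hi j.
have tele_nat := @telescope_prodf R _ _ (fun k => k%:R) _ lo_lt_hi.
have tele_succ := @telescope_prodf R _ _ (fun k => k.+1%:R) _ lo_lt_hi.
rewrite /= in tele_nat tele_succ.
rewrite block_prodE // -prodrXl -tele_nat => [|k /andP[k_gt _]]; last first.
  by rewrite pnatr_eq0 -lt0n (ltn_trans lo_gt0).
rewrite -tele_succ => [|k _]; last by rewrite pnatr_eq0.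
rewrite -prodrXl -big_split /= big_nat_cond [X in _ <= X]big_nat_cond.
apply: ler_prod => m /andP[/andP[m_ge _] _]; apply/andP; split.
  by rewrite mulr_ge0 ?exprn_ge0 ?divr_ge0 ?ler0n.
exact: block_factor_ge (leq_trans lo_gt0 m_ge) (ltn0Sn j).
Qed.

Lemma block_prod_gt j : (3 <= j)%N -> ((log_bound j).+1%:R : R) < block_prod j.
Proof.
move=> j_ge3.
have lo_gt0 : (0 < block_lo j)%N by rewrite expn_gt0.
have ratio_gt : ((log_bound j).+1%:R : R) ^+ j.+1
    < ((block_hi j)%:R / (block_lo j)%:R) ^+ j.+1 * ((block_hi j).+1%:R / (block_lo j).+1%:R).
  rewrite expr_div_n mulf_div ltr_pdivlMr ?mulr_gt0 ?exprn_gt0 ?ltr0n // mulrA.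
  by rewrite -!natrX -!natrM ltr_nat block_ratio_nat.
have prod_ge0 : 0 <= block_prod j.
  by apply: prodr_ge0 => k _; rewrite addr_ge0 ?invr_ge0.
have := lt_le_trans ratio_gt (block_prod_pow_ge j_ge3).
by rewrite ltr_pXn2r // qualifE /= ler0n.
Qed.

End BlockProduct.

Lemma qseq_large i : 4 <= i -> qseq i = i - i %/ (log2log2log2 i).+2.
Proof.
move=> i_ge4; apply/maxn_idPr.
have : i %/ (log2log2log2 i).+2 <= i %/ 2 by apply: leq_div2l.
have := leq_trunc_div i 2; have := ltn_ceil i (ltn0Sn 1); lia.
Qed.

Lemma log2log2log2_ge j k : 2 ^ 2 ^ 2 ^ j <= k -> j <= log2log2log2 k.
Proof. by move=> k_ge; do 3 apply: trunc_log_max => //. Qed.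

Section QseqRatio.
Local Open Scope ring_scope.

Lemma qseq_ratio_bounds (R : realFieldType) i : (4 <= i)%N ->
  1 - ((log2log2log2 i).+2%:R)^-1 <= ((qseq i)%:R / i%:R : R) <= 1.
Proof.
move=> i_ge4; rewrite qseq_large //.
set p := (log2log2log2 i).+2.
have i_gt0 : (0 : R) < i%:R by rewrite ltr0n; lia.
have p_gt0 : (0 : R) < p%:R by rewrite ltr0n.
rewrite natrB ?leq_div //; apply/andP; split.
  have div_le : ((i %/ p)%:R : R) <= i%:R / p%:R.
    by rewrite ler_pdivlMr // -natrM ler_nat leq_trunc_div.
  rewrite ler_pdivlMr // mulrBl mul1r (mulrC (p%:R^-1)); lra.
by rewrite ler_pdivrMr // mul1r lerBlDr lerDl ler0n.
Qed.

Local Open Scope classical_set_scope.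

Lemma qseq_ratio_cvg (R : realType) :
  (fun k => ((qseq k.+1)%:R / (k.+1)%:R : R)) @ \oo --> (1 : R).
Proof.
apply/(@cvgrPdist_le _ R^o) => e e_gt0.
have e_inv_ge0 : 0 <= e^-1 by rewrite invr_ge0 ltW.
have N_gt := archi_boundP e_inv_ge0; set N := Num.bound e^-1 in N_gt.
exists (maxn 4 (2 ^ 2 ^ 2 ^ N)) => // k /=; rewrite geq_max => /andP[k_ge4 k_big].
have N_le : (N <= log2log2log2 k.+1)%N by apply/log2log2log2_ge/leqW.
have /andP[ratio_ge ratio_le1] := qseq_ratio_bounds R (leqW k_ge4).
have inv_le_e : ((log2log2log2 k.+1).+2%:R : R)^-1 <= e.
  rewrite -[e]invrK lef_pV2 ?posrE ?ltr0n ?invr_gt0 //.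
  by apply/ltW/(lt_le_trans N_gt); rewrite ler_nat; lia.
rewrite ger0_norm ?subr_ge0 //; apply: le_trans inv_le_e.
by rewrite lerBlDr addrC -lerBlDr.
Qed.

Lemma liminf_ratio_qseq : limn_einf (ratio_seq qseq) = 1%E.
Proof.
have cvg1 : ratio_seq qseq @ \oo --> 1%E.
  by apply: cvg_EFin; [exact: nearW | exact: qseq_ratio_cvg].
exact: (cvg_limn_einf_sup cvg1).1.
Qed.

End QseqRatio.

(** * Covering Q by hyperplanes *)

Definition hyp_of n M (v : {ffun 'I_n -> 'I_M}) (S : {set 'I_n}) : 'I_n -> option nat :=
  fun k => if k \in S then Some (v k : nat) else None.

Lemma fixedc_hyp_of n M (v : {ffun 'I_n -> 'I_M}) S k : fixedc (hyp_of v S) k = (k \in S).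
Proof. by rewrite /fixedc /hyp_of; case: (k \in S). Qed.

Section BlockCover.
Variable j : nat.
Hypothesis j_ge3 : 3 <= j.
Local Notation n := (block_dim j).
Local Notation Q := (@box n n (fun k : 'I_n => qseq k.+1)).

Definition block_coords : {set 'I_n} := [set k : 'I_n | block_lo j * period j <= k.+1 < n].

Definition block_subsets : pred {set 'I_n} :=
  [pred S : {set 'I_n} | (S \subset block_coords) && (S != finset.set0)].

Definition subset_weight (S : {set 'I_n}) := \prod_(k in S) qseq k.+1.

Lemma subset_weight_gt0 S : 0 < subset_weight S.
Proof. by rewrite prodn_gt0 // => k; apply: leq_trans (qseq_ge2 _). Qed.

Lemma block_coords_prod (R : realFieldType) :
  (\prod_(k in block_coords) (1 + ((qseq k.+1)%:R : R)^-1) = block_prod R j)%R.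
Proof.
rewrite /block_prod (@big_nat_widenl _ _ _ _ 1) ?muln_gt0 ?expn_gt0 //.
rewrite (@big_nat_widen _ _ _ _ _ n.+1) // big_add1 /= big_mkord.
by apply: eq_bigl => k; rewrite inE.
Qed.

Lemma sum_inv_subset_weight (R : realFieldType) :
  (\sum_(S <- enum block_subsets) ((subset_weight S)%:R : R)^-1 = block_prod R j - 1)%R.
Proof.
rewrite big_enum /= -block_coords_prod -sum_nonempty_subsets_prod.
by apply: eq_bigr => S _; rewrite /subset_weight natr_prod prodfV.
Qed.

Lemma card_box_lt_expR (R : realType) : (#|Q|%:R < expR (block_prod R j - 1) :> R)%R.
Proof.
have card_le : #|Q| <= 2 ^ log_bound j.
  apply: leq_trans (max_card _) _; rewrite card_ffun !card_ord /log_bound mulnC expnM.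
  by rewrite leq_exp2r ?muln_gt0 ?expn_gt0 // block_dim_lt_exp2.
have exp2_le : ((2 ^ log_bound j)%:R <= expR (log_bound j)%:R :> R)%R.
  rewrite natrX -[X in expR X]mulr1 expRM_natl lerXn2r ?nnegrE ?ler0n ?expR_ge0 //.
  by have := expR_ge1Dx (1 : R); rewrite (_ : 1 + 1 = 2%:R)%R.
rewrite -(ler_nat R) in card_le.
apply: le_lt_trans (le_trans card_le exp2_le) _; rewrite ltr_expR.
by have := block_prod_gt R j_ge3; rewrite -natr1; lra.
Qed.

Lemma block_cover_values :
  exists a : {set 'I_n} -> {ffun 'I_n -> 'I_n.+1},
    forall x, x \in Q -> exists2 S, S \in block_subsets & proj S x = a S.
Proof.
have card_lt : (#|Q|%:R < expR (\sum_(S <- enum block_subsets) ((subset_weight S)%:R)^-1)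
                :> Rdefinitions.R)%R.
  by rewrite sum_inv_subset_weight; exact: card_box_lt_expR.
have [a cover] := greedy_cover [ffun=> ord0] (enum_uniq block_subsets) subset_weight_gt0
  (fun S _ => @card_proj_box n n (fun k => qseq k.+1) S) card_lt.
by exists a => x /cover[S]; rewrite mem_enum; exists S.
Qed.

Lemma block_dim_ge2 : 2 <= n.
Proof. by apply: (@leq_trans (period j)); rewrite /block_dim ?leq_pmull ?expn_gt0. Qed.

Lemma box_of_inQ x : inQ qseq x -> exists2 y, y \in Q & forall k, y k = x k :> nat.
Proof.
move=> xQ.
have x_lt k : x k < n.+1.
  have /andP[_ le_q] := xQ k; apply: leq_trans le_q (leq_trans (qseq_le _) _).
  by rewrite geq_max ltn_ord block_dim_ge2.
exists [ffun k => inord (x k)]; last by move=> k; rewrite ffunE inordK.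
by rewrite inE; apply/forallP => k; rewrite ffunE inordK //; exact: xQ.
Qed.

Lemma block_hyperplane_cover :
  exists Acal : ('I_n -> option nat) -> Prop,
    [/\ forall A, Acal A -> hyperplane qseq A /\ has_fixed A,
        forall x : 'I_n -> nat, inQ qseq x -> exists A, Acal A /\ in_hyp x A,
        forall A B, Acal A -> Acal B -> A <> B -> ~ parallel A B &
        forall A, Acal A -> forall k : 'I_n, fixedc A k -> block_lo j * period j <= k.+1].
Proof.
have [a cover] := block_cover_values.
exists (fun A => exists2 S, S \in block_subsets & A = hyp_of (a S) S /\ hyperplane qseq A).
split.
- move=> A [S /andP[_ S_ne0] [-> hyp]]; split => //.
  by case/set0Pn: S_ne0 => k kS; exists k; rewrite fixedc_hyp_of.
- move=> x xQ; have [y yQ yx] := box_of_inQ xQ; have [S S_sub proj_eq] := cover y yQ.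
  have a_eq k : k \in S -> a S k = x k :> nat by move=> kS; rewrite -proj_eq ffunE kS yx.
  exists (hyp_of (a S) S); split; last by move=> k; rewrite /hyp_of; case: ifP => // /a_eq.
  exists S => //; split => // k; rewrite /hyp_of; case: ifP => // /a_eq ->; exact: xQ.
- move=> A B [S _ [-> _]] [S' _ [-> _]] neq par; apply: neq.
  suff -> : S = S' by [].
  by apply/setP => k; have := par k; rewrite !fixedc_hyp_of.
- move=> A [S /andP[S_sub _] [-> _]] k; rewrite fixedc_hyp_of => kS.
  by have := fintype.subsetP S_sub k kS; rewrite inE => /andP[].
Qed.

End BlockCover.

Theorem proposition4p1 :
  exists q : nat -> nat,
    (forall k : nat, (1 <= k)%N -> (2 <= q k)%N) /\
    limn_einf (ratio_seq q) = 1%E /\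
    (forall C : nat, (0 < C)%N ->
       exists n : nat, exists Acal : ('I_n -> option nat) -> Prop,
         (forall A, Acal A -> hyperplane q A /\ has_fixed A) /\
         (forall x : 'I_n -> nat, inQ q x -> exists A, Acal A /\ in_hyp x A) /\
         (forall A B, Acal A -> Acal B -> A <> B -> ~ parallel A B) /\
         (forall A, Acal A -> forall k : 'I_n, (k.+1 <= C)%N -> ~~ fixedc A k)).
Proof.
exists qseq; split; first by move=> k _; exact: qseq_ge2.
split; first exact: liminf_ratio_qseq.
move=> C _.
have [Acal [hyp cover nonparallel fixed_late]] := block_hyperplane_cover (leq_addl C 3).
exists (block_dim (C + 3)), Acal; do !split => //.
move=> A A_in k k_le_C; apply/negP => /(fixed_late A A_in k).
by have := block_start_gt (C + 3); lia.
Qed.
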